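(* Let $\Omega$ be a set, let $\Phi$ be the family consisting of all coherent sets of gambles on $\Omega$ together with $\mathcal{L}(\Omega)$, and let $At(\Phi)$ be its set of atoms (maximal coherent sets). For all $M,M'\in At(\Phi)$ and every $x\in Q$, $$M\equiv_x M' \iff \epsilon_x(M)=\epsilon_x(M') \iff M,M'\in At(\epsilon_x(M)).$$ Consequently, for all $x,y\in Q$: $At_x\le At_y$ if and only if $At(\epsilon_x(M))\supseteq At(\epsilon_y(M))$ for every $M\in At(\Phi)$.
   Context: A gamble on $\Omega$ is a bounded function $f:\Omega\to\mathbb{R}$; $\mathcal{L}(\Omega)$ is the set of all gambles and $\mathcal{L}^+(\Omega)=\{f\in\mathcal{L}(\Omega): f\ge 0, f\ne 0\}$. A set $\mathcal{D}\subseteq\mathcal{L}(\Omega)$ is coherent if (D1) $\mathcal{L}^+(\Omega)\subseteq\mathcal{D}$, (D2) $0\notin\mathcal{D}$, (D3) $f,g\in\mathcal{D}\Rightarrow f+g\in\mathcal{D}$, (D4) $f\in\mathcal{D},\lambda>0\Rightarrow\lambda f\in\mathcal{D}$. $\Phi$ is the set of coherent sets together with $\mathcal{L}(\Omega)$; for $\mathcal{K}\subseteq\mathcal{L}(\Omega)$ put $\mathcal{C}(\mathcal{K})=\bigcap\{\mathcal{D}\in\Phi:\mathcal{K}\subseteq\mathcal{D}\}$. Questions: $Q$ is an index set, each $x\in Q$ corresponds to a partition $\mathcal{P}_x$ of $\Omega$ (equivalence relation $\equiv_x$), and $\{\mathcal{P}_x:x\in Q\}$ is closed under join, where partitions are ordered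 by $\mathcal{P}_x\le\mathcal{P}_y$ iff every block of $\mathcal{P}_y$ is contained in a block of $\mathcal{P}_x$, and the join is the partition of nonempty intersections of blocks. A gamble is $x$-measurable if it is constant on each block of $\mathcal{P}_x$; $\mathcal{L}_x$ denotes the set of $x$-measurable gambles. Extraction: $\epsilon_x(\mathcal{D})=\mathcal{C}(\mathcal{D}\cap\mathcal{L}_x)$ for $\mathcal{D}\in\Phi$. Atoms of $\Phi$ are the maximal coherent sets (coherent sets not properly contained in another coherent set); $At(\Phi)$ denotes the set of all of them, and for $\mathcal{D}\in\Phi$, $At(\mathcal{D})=\{M\in At(\Phi):\mathcal{D}\subseteq M\}$. For $x\in Q$, the sets $At(\epsilon_x(M))$, $M\in At(\Phi)$, form a partition $At_x$ of $At(\Phi)$ (known from prior work); $M\equiv_x M'$ means $M$ and $M'$ lie in the same block of $At_x$, i.e. there is $M''\in At(\Phi)$ with $M,M'\in At(\epsilon_x(M''))$. Partitions of $At(\Phi)$ are ordered by $At_x\le At_y$ iff $M\equiv_y M'$ implies $M\equiv_x M'$ for all $M,M'\in At(\Phi)$. *)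

From Stdlib Require Import Reals.
Open Scope R_scope.
Set Implicit Arguments.

Section Gambles.
Variable Omega : Type.

Definition gamble_set := (Omega -> R) -> Prop.

Definition bounded (f : Omega -> R) : Prop :=
  exists b : R, forall w, Rabs (f w) <= b.

Definition Lall : gamble_set := bounded.

Definition zero_g : Omega -> R := fun _ => 0.

Definition Lpos (f : Omega -> R) : Prop :=
  bounded f /\ (forall w, 0 <= f w) /\ f <> zero_g.

Definition subset (A B : gamble_set) : Prop := forall f, A f -> B f.
Definition seteq (A B : gamble_set) : Prop := forall f, A f <-> B f.

Definition coherent (D : gamble_set) : Prop :=
  subset D Lall /\
  subset Lpos D /\
  ~ D zero_g /\
  (forall f g, D f -> D g -> D (fun w => f w + g w)) /\
  (forall f (l : R), D f -> 0 < l -> D (fun w => l * f w)).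

Definition Phi (D : gamble_set) : Prop := coherent D \/ seteq D Lall.

Definition Cl (K : gamble_set) : gamble_set :=
  fun f => forall D, Phi D -> subset K D -> D f.

Definition atom (M : gamble_set) : Prop :=
  coherent M /\ (forall D, coherent D -> subset M D -> seteq D M).

Definition At (D : gamble_set) (M : gamble_set) : Prop := atom M /\ subset D M.

Section Questions.
Variable Q : Type.
(* each question x corresponds to the partition given by the equivalence eqv x *)
Variable eqv : Q -> Omega -> Omega -> Prop.

Definition measurable (x : Q) (f : Omega -> R) : Prop :=
  forall w w', eqv x w w' -> f w = f w'.

Definition Lx (x : Q) : gamble_set := fun f => bounded f /\ measurable x f.

Definition extr (x : Q) (D : gamble_set) : gamble_set :=
  Cl (fun f => D f /\ Lx x f).

Definition at_equiv (x : Q) (M M' : gamble_set) : Prop :=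
  exists M'', atom M'' /\ At (extr x M'') M /\ At (extr x M'') M'.

Definition At_le (x y : Q) : Prop :=
  forall M M', atom M -> atom M' -> at_equiv y M M' -> at_equiv x M M'.

End Questions.
End Gambles.

Definition is_equiv {Omega : Type} (e : Omega -> Omega -> Prop) : Prop :=
  (forall w, e w w) /\ (forall w w', e w w' -> e w' w) /\
  (forall w1 w2 w3, e w1 w2 -> e w2 w3 -> e w1 w3).

Definition join_closed {Omega Q : Type} (eqv : Q -> Omega -> Omega -> Prop) : Prop :=
  forall x y, exists z, forall w w', eqv z w w' <-> (eqv x w w' /\ eqv y w w').

From Stdlib Require Import Reals Lra Classical FunctionalExtensionality.
Open Scope R_scope.
Set Implicit Arguments.

(* A maximal coherent set M is complete: for every nonzero gamble f, M
   contains f or -f, since otherwise the positive hull of M and -f would be a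
   strictly larger coherent set.  Consequently, if the x-measurable part of M
   lies in a coherent set M', the two x-measurable parts coincide (an
   x-measurable f in M' \ M would put -f in M, hence f + -f = 0 in M').  So
   epsilon_x(M) = epsilon_x(M') exactly when M' contains epsilon_x(M), i.e. when
   M' is in At(epsilon_x(M)), and every claim follows. *)

Section Gambles.
Variable Omega : Type.
Implicit Types (M D K L : gamble_set Omega) (f g : Omega -> R).

Lemma mem_ext M f g : M f -> (forall w, f w = g w) -> M g.
Proof. intros Hf E. replace g with f; [exact Hf|]. now apply functional_extensionality. Qed.

Lemma subset_Cl K : subset K (Cl K).
Proof. intros f Hf D _ HKD. now apply HKD. Qed.

Lemma Cl_least K D : Phi D -> subset K D -> subset (Cl K) D.
Proof. intros HD HKD f Hf. now apply Hf. Qed.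

Lemma Cl_ext K K' : seteq K K' -> seteq (Cl K) (Cl K').
Proof.
  intros E f; split; intros Hf D HD HKD; apply Hf; trivial; intros g Hg; apply HKD, E, Hg.
Qed.

Definition extend_neg M f : gamble_set Omega :=
  fun h => exists g l, (M g \/ (g = @zero_g Omega /\ 0 < l)) /\ 0 <= l /\
                       forall w, h w = g w - l * f w.

Lemma subset_extend_neg M f : subset M (extend_neg M f).
Proof. intros h Hh. exists h, 0. repeat split; auto with real. intro; ring. Qed.

Lemma extend_neg_opp M f : extend_neg M f (fun w => - f w).
Proof.
  exists (@zero_g Omega), 1. repeat split; auto with real. intro; unfold zero_g; ring.
Qed.

Lemma extend_neg_bounded M f :
  subset M (@Lall Omega) -> bounded f -> subset (extend_neg M f) (@Lall Omega).
Proof.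
  intros HML [bf Hbf] h (g & l & Hg & Hl & Hh).
  assert (bounded g) as [bg Hbg].
  { destruct Hg as [Hg | [-> _]]; [now apply HML|].
    exists 0. intro w. unfold zero_g. rewrite Rabs_R0. lra. }
  exists (bg + l * bf). intro w. rewrite Hh. unfold Rminus.
  eapply Rle_trans; [apply Rabs_triang|].
  rewrite Rabs_Ropp, Rabs_mult, (Rabs_pos_eq l Hl).
  specialize (Hbg w). specialize (Hbf w).
  assert (l * Rabs (f w) <= l * bf) by (apply Rmult_le_compat_l; auto). lra.
Qed.

Lemma extend_neg_nonzero M f : coherent M -> f <> @zero_g Omega -> ~ M f ->
  ~ extend_neg M f (@zero_g Omega).
Proof.
  intros (_ & _ & HM0 & _ & HMscale) Hf0 HMf (g & l & Hg & Hl & Hh).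
  unfold zero_g in Hh.
  destruct Hg as [Hg | [-> Hl0]].
  - destruct (Req_dec l 0) as [-> | Hl0].
    + apply HM0. apply (mem_ext M _ _ Hg). intro w. specialize (Hh w). unfold zero_g. lra.
    + apply HMf. apply (mem_ext M (fun w => / l * g w)).
      * apply HMscale; trivial. apply Rinv_0_lt_compat. lra.
      * intro w. specialize (Hh w). field_simplify_eq; lra.
  - apply Hf0. apply functional_extensionality. intro w.
    specialize (Hh w). unfold zero_g in *.
    apply (Rmult_eq_reg_l l); lra.
Qed.

Lemma coherent_extend_neg M f : coherent M -> bounded f -> f <> @zero_g Omega -> ~ M f ->
  coherent (extend_neg M f).
Proof.
  intros HM Hf Hf0 HMf.
  pose proof HM as (HML & HMpos & _ & HMadd & HMscale).
  repeat split.
  - now apply extend_neg_bounded.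
  - intros h Hh. now apply subset_extend_neg, HMpos.
  - now apply extend_neg_nonzero.
  - intros h1 h2 (g1 & l1 & Hg1 & Hl1 & Hh1) (g2 & l2 & Hg2 & Hl2 & Hh2).
    exists (fun w => g1 w + g2 w), (l1 + l2).
    split; [|split; [lra | intro w; rewrite Hh1, Hh2; ring]].
    destruct Hg1 as [Hg1 | [-> Hl1']], Hg2 as [Hg2 | [-> Hl2']]; unfold zero_g.
    + left; auto.
    + left. apply (mem_ext M _ _ Hg1). intro; ring.
    + left. apply (mem_ext M _ _ Hg2). intro; ring.
    + right. split; [apply functional_extensionality; intro; unfold zero_g; ring | lra].
  - intros h c (g & l & Hg & Hl & Hh) Hc.
    exists (fun w => c * g w), (c * l).
    split; [|split; [apply Rmult_le_pos; lra | intro w; rewrite Hh; ring]].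
    destruct Hg as [Hg | [-> Hl']].
    + left; auto.
    + right. split; [apply functional_extensionality; intro; unfold zero_g; ring|].
      now apply Rmult_lt_0_compat.
Qed.

Lemma atom_complete M f : atom M -> bounded f -> f <> @zero_g Omega ->
  M f \/ M (fun w => - f w).
Proof.
  intros [HM Hmax] Hf Hf0.
  destruct (classic (M f)) as [HMf | HMf]; [now left | right].
  apply (Hmax (extend_neg M f)).
  - now apply coherent_extend_neg.
  - apply subset_extend_neg.
  - apply extend_neg_opp.
Qed.

Lemma atom_trace_maximal L M M' :
  subset L (@Lall Omega) -> (forall f, L f -> L (fun w => - f w)) ->
  atom M -> coherent M' -> (forall f, M f -> L f -> M' f) ->
  forall f, M' f -> L f -> M f.
Proof.
  intros HL HLopp HM (_ & _ & HM'0 & HM'add & _) HMM' f HM'f HLf.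
  assert (Hf0 : f <> @zero_g Omega) by (intros ->; contradiction).
  destruct (atom_complete HM (HL f HLf) Hf0) as [HMf | HMopp]; trivial.
  exfalso. apply HM'0.
  apply (mem_ext M' (fun w => f w + - f w)); [|intro; unfold zero_g; ring].
  apply HM'add; auto.
Qed.

Section Questions.
Variables (Q : Type) (eqv : Q -> Omega -> Omega -> Prop).

Lemma Lx_opp x f : Lx eqv x f -> Lx eqv x (fun w => - f w).
Proof.
  intros [[b Hb] Hmeas]. split.
  - exists b. intro w. rewrite Rabs_Ropp. apply Hb.
  - intros w w' E. now rewrite (Hmeas w w' E).
Qed.

Lemma extr_subset x M : coherent M -> subset (extr eqv x M) M.
Proof. intros HM. apply Cl_least; [now left | now intros f []]. Qed.

Lemma At_extr_self x M : atom M -> At (extr eqv x M) M.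
Proof. intros HM. split; trivial. apply extr_subset, HM. Qed.

Lemma extr_eq_of_subset x M M' : atom M -> coherent M' ->
  subset (extr eqv x M) M' -> seteq (extr eqv x M) (extr eqv x M').
Proof.
  intros HM HM' Hsub. apply Cl_ext. intro f; split; intros [Hf Hxf]; split; trivial.
  - apply Hsub, subset_Cl. now split.
  - apply atom_trace_maximal with (L := Lx eqv x) (M' := M'); trivial.
    + now intros g [].
    + apply Lx_opp.
    + intros g Hg Hxg. apply Hsub, subset_Cl. now split.
Qed.

Lemma At_extr_iff x M M' : atom M ->
  (At (extr eqv x M) M' <-> atom M' /\ seteq (extr eqv x M) (extr eqv x M')).
Proof.
  intros HM; split.
  - intros [HM' Hsub]. split; trivial. exact (extr_eq_of_subset HM (proj1 HM') Hsub).
  - intros [HM' E]. split; trivial.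
    intros f Hf. apply (extr_subset (x := x) (proj1 HM')). exact (proj1 (E f) Hf).
Qed.

Lemma at_equiv_iff x M M' : atom M -> atom M' ->
  (at_equiv eqv x M M' <-> seteq (extr eqv x M) (extr eqv x M')).
Proof.
  intros HM HM'; split.
  - intros (N & HN & HNM & HNM').
    apply At_extr_iff in HNM as [_ E]; apply At_extr_iff in HNM' as [_ E']; trivial.
    intro f. specialize (E f). specialize (E' f). tauto.
  - intros E. exists M. split; [|split]; trivial.
    + now apply At_extr_self.
    + now apply At_extr_iff.
Qed.

Lemma At_extr_iff_at_equiv x M M' : atom M ->
  (At (extr eqv x M) M' <-> atom M' /\ at_equiv eqv x M M').
Proof.
  intros HM. rewrite At_extr_iff by trivial.
  split; intros [HM' E]; split; trivial; now apply at_equiv_iff.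
Qed.

End Questions.
End Gambles.

Theorem lemma1 (Omega Q : Type) (eqv : Q -> Omega -> Omega -> Prop)
  (Heqv : forall x, is_equiv (eqv x)) (Hjoin : join_closed eqv) :
  (forall (M M' : gamble_set Omega) (x : Q), atom M -> atom M' ->
     (at_equiv eqv x M M' <-> seteq (extr eqv x M) (extr eqv x M')) /\
     (seteq (extr eqv x M) (extr eqv x M') <->
        (At (extr eqv x M) M /\ At (extr eqv x M) M'))) /\
  (forall x y : Q,
     At_le eqv x y <->
     (forall M : gamble_set Omega, atom M ->
        forall M'' : gamble_set Omega,
          At (extr eqv y M) M'' -> At (extr eqv x M) M'')).
Proof.
  split.
  - intros M M' x HM HM'. split; [now apply at_equiv_iff|].
    rewrite (At_extr_iff eqv x M' HM).
    pose proof (At_extr_self eqv x HM). tauto.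
  - intros x y. unfold At_le. split.
    + intros Hle M HM M'' HyM''.
      apply At_extr_iff_at_equiv in HyM'' as [HM'' Hy]; trivial.
      apply At_extr_iff_at_equiv; auto.
    + intros Hxy M M' HM HM' Hy.
      apply (At_extr_iff_at_equiv eqv x M' HM), Hxy; trivial.
      now apply At_extr_iff_at_equiv.
Qed.
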